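(* Let $(X,\pi)$ be a finite symmetric two-player game with relative payoff game $(X,\Delta)$. Then $(X,\Delta)$ is a generalized rock-paper-scissors game if and only if there exists an imitation cycle.
   Context: A symmetric two-player game $(X,\pi)$ has common action set $X$ and payoff $\pi:X\times X\to\mathbb{R}$. Relative payoff: $\Delta(x,y)=\pi(x,y)-\pi(y,x)$, so $(X,\Delta)$ is a symmetric zero-sum game. A symmetric zero-sum game $(Y,\Delta)$ is a generalized rock-paper-scissors matrix if for every $y\in Y$ there is $x\in Y$ with $\Delta(x,y)>0$; $(X,\Delta)$ is a generalized rock-paper-scissors game if some nonempty $\bar X\subseteq X$ makes $(\bar X,\Delta|_{\bar X\times\bar X})$ a generalized rock-paper-scissors matrix. A cycle is a finite sequence of profiles $(x_0,y_0),\dots,(x_n,y_n)$ in $X\times X$, not all equal, with $(x_0,y_0)=(x_n,y_n)$; it is an imitation cycle if for all consecutive profiles $(x_t,y_t),(x_{t+1},y_{t+1})$ on it, $\Delta(x_t,y_t)>0$ and $y_{t+1}=x_t$. *)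

From mathcomp Require Import all_boot all_order all_algebra.
Set Implicit Arguments. Unset Strict Implicit. Unset Printing Implicit Defensive.
Import Order.TTheory GRing.Theory Num.Theory.
Local Open Scope ring_scope.

(* A symmetric two-player game (X, pi): common finite action set X,
   payoff pi : X -> X -> R, pi x y = payoff of playing x against y. *)

Definition rel_payoff (R : numDomainType) (X : Type) (pi : X -> X -> R)
  (x y : X) : R := pi x y - pi y x.

Definition gen_rps_matrix (R : numDomainType) (X : finType)
  (D : X -> X -> R) (Y : {set X}) : Prop :=
  forall y, y \in Y -> exists2 x, x \in Y & 0 < D x y.

Definition gen_rps_game (R : numDomainType) (X : finType)
  (D : X -> X -> R) : Prop :=
  exists Y : {set X}, Y != set0 /\ gen_rps_matrix D Y.

(* A cycle: finite sequence (x_0,y_0),...,(x_n,y_n) of profiles, given as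
   p0 :: s (so (x_0,y_0) = p0 and (x_n,y_n) = last p0 s), with
   last p0 s = p0 and not all profiles equal (this forces n >= 1). *)
Definition is_cycle (X : eqType) (p0 : X * X) (s : seq (X * X)) : Prop :=
  last p0 s = p0 /\ exists2 q, q \in s & q != p0.

Definition imitation_step (R : numDomainType) (X : eqType)
  (D : X -> X -> R) (p q : X * X) : bool :=
  (0 < D p.1 p.2) && (q.2 == p.1).

Definition imitation_cycle (R : numDomainType) (X : eqType)
  (D : X -> X -> R) (p0 : X * X) (s : seq (X * X)) : Prop :=
  is_cycle p0 s /\ path (imitation_step D) p0 s.

From mathcomp Require Import all_boot all_order all_algebra.
Set Implicit Arguments. Unset Strict Implicit. Unset Printing Implicit Defensive.
Import Order.TTheory GRing.Theory Num.Theory.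
Local Open Scope ring_scope.

(* An imitation cycle visits a set of strategies in which every strategy is
   beaten by the one played just after it, which is a generalized
   rock-paper-scissors matrix.  Conversely, on such a matrix pick for every
   strategy y a strategy f y beating it; iterating f from a point of the
   matrix eventually cycles, and the profiles (f y, y) along that cycle form
   an imitation cycle, which is not constant since no strategy beats itself. *)

Lemma path_mem_belast_succ (T : eqType) (e : rel T) x s :
  path e x s -> forall p, p \in belast x s -> exists2 q, q \in s & e p q.
Proof.
elim: s x => [|y s IH] x //= /andP[exy ps] p.
rewrite inE => /orP[/eqP-> | pb]; first by exists y; rewrite ?mem_head.
by have [q qs epq] := IH y ps p pb; exists q; rewrite // inE qs orbT.
Qed.

Lemma cycle_mem_succ (T : eqType) (e : rel T) x s :
  path e x s -> last x s = x -> s != [::] ->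
  forall p, p \in x :: s -> exists2 q, q \in x :: s & e p q.
Proof.
move=> ps lx sn p pxs.
suff [q qs epq] : exists2 q, q \in s & e p q by exists q; rewrite // inE qs orbT.
move: pxs; rewrite lastI mem_rcons inE => /orP[|]; last first.
  by move=> pb; exact: (path_mem_belast_succ ps pb).
rewrite lx => /eqP ->; apply: (path_mem_belast_succ ps (p := x)).
by case: s ps lx sn => //= y s; rewrite mem_head.
Qed.

Lemma iter_eventually_periodic (T : finType) (f : T -> T) x :
  exists i m, (0 < m)%N /\ iter m f (iter i f x) = iter i f x.
Proof.
have /trajectP[i lt_i_order iter_order] := looping_order f x.
exists i, (order f x - i)%N; split; first by rewrite subn_gt0.
by rewrite -iterD subnK ?iter_order // ltnW.
Qed.

Section ImitationCycles.

Variables (R : numDomainType) (X : finType) (D : X -> X -> R).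

Lemma imitation_cycle_gen_rps p0 s : imitation_cycle D p0 s -> gen_rps_game D.
Proof.
move=> [[last_p0 [q qs _]] p0s].
have s_neq_nil : s != [::] by case: s qs {p0s last_p0}.
have succ := cycle_mem_succ p0s last_p0 s_neq_nil.
exists [set p.1 | p in [set p | p \in p0 :: s]]; split.
  by apply/set0Pn; exists p0.1; apply/imsetP; exists p0; rewrite ?inE ?eqxx.
move=> y /imsetP[p]; rewrite inE => p_in ->.
have [r r_in /andP[_ /eqP <-]] := succ p p_in.
exists r.1; first by apply/imsetP; exists r; rewrite ?inE.
by have [t _ /andP[]] := succ r r_in.
Qed.

Section FromRPSMatrix.

Variables (Y : {set X}) (f : X -> X).
Hypothesis D_diag : forall x, D x x = 0.
Hypothesis f_in : {in Y, forall y, f y \in Y}.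
Hypothesis f_beats : {in Y, forall y, 0 < D (f y) y}.

Let beaten_by_f y := (f y, y).

Lemma imitation_path_beaten_by_f y n : y \in Y ->
  path (imitation_step D) (beaten_by_f y) (map beaten_by_f (traject f (f y) n)).
Proof.
move=> yY; rewrite path_map.
have iter_in k : iter k f y \in Y by elim: k => //= k; apply: f_in.
apply: (@sub_in_path _ (mem Y) (frel f)); last exact: fpath_traject.
  by move=> a b aY _ /eqP <-; rewrite /imitation_step /= f_beats ?eqxx.
apply/allP => z; rewrite -trajectS => /trajectP[k _ ->]; exact: iter_in.
Qed.

Lemma imitation_cycle_beaten_by_f y m : y \in Y -> (0 < m)%N ->
  iter m f y = y ->
  imitation_cycle D (beaten_by_f y) (map beaten_by_f (traject f (f y) m)).
Proof.
move=> yY m_gt0 periodic; split; last exact: imitation_path_beaten_by_f.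
split; first by rewrite last_map last_traject periodic.
exists (beaten_by_f (f y)).
  by case: m m_gt0 {periodic} => // m _; rewrite trajectS /= mem_head.
apply/eqP => /(congr1 snd) /= fy_y.
by have := f_beats yY; rewrite fy_y D_diag ltxx.
Qed.

End FromRPSMatrix.

Lemma gen_rps_matrix_beater Y : gen_rps_matrix D Y ->
  exists f : X -> X, {in Y, forall y, f y \in Y} /\ {in Y, forall y, 0 < D (f y) y}.
Proof.
move=> rpsY; pose f y := odflt y [pick x in Y | 0 < D x y].
have fP y : y \in Y -> (f y \in Y) && (0 < D (f y) y).
  move=> yY; rewrite /f; case: pickP => [x /andP[-> ->] //|] /=.
  by have [x xY Dx] := rpsY y yY => /(_ x); rewrite xY Dx.
by exists f; split=> y /fP /andP[].
Qed.

Lemma gen_rps_imitation_cycle : (forall x, D x x = 0) ->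
  gen_rps_game D -> exists p0 s, imitation_cycle D p0 s.
Proof.
move=> D_diag [Y [/set0Pn[y0 y0Y] /gen_rps_matrix_beater[f [f_in f_beats]]]].
have [i [m [m_gt0 periodic]]] := iter_eventually_periodic f y0.
have iY : iter i f y0 \in Y by elim: (i) => //= k; apply: f_in.
do 2 eexists.
exact: (imitation_cycle_beaten_by_f D_diag f_in f_beats iY m_gt0 periodic).
Qed.

End ImitationCycles.

Theorem lemma3 (R : realDomainType) (X : finType) (pi : X -> X -> R) :
  gen_rps_game (rel_payoff pi) <->
  exists (p0 : X * X) (s : seq (X * X)), imitation_cycle (rel_payoff pi) p0 s.
Proof.
have rel_payoff_diag x : rel_payoff pi x x = 0 by rewrite /rel_payoff subrr.
split; first exact: gen_rps_imitation_cycle.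
by move=> [p0 [s]]; apply: imitation_cycle_gen_rps.
Qed.
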